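(* Let $f:\mathbb{F}_{2^n}\to\mathbb{F}_{2^n}$ be APN. Then \[|\mathrm{Im}(f)|\geq\begin{cases}\frac{2^n+1}{3} & n\text{ odd},\\ \frac{2^n+2}{3} & n \text{ even}.\end{cases}\] If $n$ is odd and $|\mathrm{Im}(f)|=\frac{2^n+1}{3}$, then $\omega(y_0)=2$ for one element $y_0\in\mathrm{Im}(f)$ and $\omega(y)=3$ for all $y\in\mathrm{Im}(f)\setminus\{y_0\}$. If $n$ is even and $|\mathrm{Im}(f)|=\frac{2^n+2}{3}$, then one of the following holds: 1. $\omega(y_0)=1$ for one element $y_0\in\mathrm{Im}(f)$ and $\omega(y)=3$ for all other $y\in\mathrm{Im}(f)$ (i.e. $f$ is almost-3-to-1); 2. $\omega(y_0)=\omega(y_1)=2$ for two elements $y_0,y_1\in\mathrm{Im}(f)$ and $\omega(y)=3$ for all other $y\in\mathrm{Im}(f)$; 3. $\omega(y_0)=\omega(y_1)=\omega(y_2)=2$ for three elements $y_0,y_1,y_2\in\mathrm{Im}(f)$, $\omega(y_3)=4$ for a unique further element $y_3\in\mathrm{Im}(f)$, and $\omega(y)=3$ for all other $y\in\mathrm{Im}(f)$.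
   Context: A map $f:\mathbb{F}_{2^n}\to\mathbb{F}_{2^n}$ is APN if for every $a\neq 0$ and every $b$ the equation $f(x+a)+f(x)=b$ has at most 2 solutions. $\omega(y)=|f^{-1}(\{y\})|$. $f$ is almost-3-to-1 if there is a unique element of $\mathrm{Im}(f)$ with exactly one preimage and every other element of $\mathrm{Im}(f)$ has exactly 3 preimages. *)

From HB Require Import structures.
From mathcomp Require Import all_boot all_algebra all_field.
Set Implicit Arguments. Unset Strict Implicit. Unset Printing Implicit Defensive.
Import GRing.Theory.
Local Open Scope ring_scope.

(* F_{2^n} is represented by an arbitrary finite field F with #|F| = 2^n
   (unique up to isomorphism). *)

Definition APN (F : finFieldType) (f : F -> F) : Prop :=
  forall a b : F, (a != 0)%R -> (#|[set x : F | (f (x + a) + f x)%R == b]| <= 2)%N.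

Definition Im (F : finFieldType) (f : F -> F) : {set F} := f @: [set: F].

Definition omega (F : finFieldType) (f : F -> F) (y : F) : nat :=
  #|[set x : F | f x == y]|.

From HB Require Import structures.
From mathcomp Require Import all_boot all_algebra all_field.
From mathcomp Require Import zify.
Import GRing.Theory.

Set Implicit Arguments.
Unset Strict Implicit.

(* Let f : F -> F with #|F| = N = 2^n, image size k = #|Im f| and fibre
   sizes w(y) = omega f y.  The proof is a second-moment count.
   - Sum of fibres:  \sum_(y in Im f) w(y) = N.
   - Collisions: \sum_(y in Im f) w(y) (w(y) - 1) counts the pairs (x, a)
     with a <> 0 and f(x + a) = f(x); in characteristic 2 APN allows at most
     two such x for each a, so this sum is at most 2 (N - 1).
   - The nat identity  m (m - 1) + 6 = 4 m + d(m),  with d(m) = (m-2)(m-3)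
     the "defect" of m, turns these into  2 N + 2 + \sum d(w(y)) <= 6 k.
   Since 2^n = 2 or 1 mod 3 according to the parity of n, this gives the
   lower bounds.  In the extremal cases the total defect is 0 (n odd) or at
   most 2 (n even); d vanishes exactly on {2, 3} and equals 2 exactly on
   {1, 4}, so all fibres have size 2 or 3 except possibly one of size 1 or 4.
   Counting the fibres of size 2 via  \sum w + #(twos) = 3 #(fibres)  then
   yields the announced fibre patterns. *)

(* The defect d(m) = (m - 2)(m - 3), written without truncated factors. *)
Definition defect (m : nat) : nat := m * m + 6 - 5 * m.

Lemma defect_id m : m * m.-1 + 6 = 4 * m + defect m.
Proof.
rewrite /defect; case: (leqP m 3) => [|m_gt3]; first by case: m => [|[|[|[|]]]].
case: m m_gt3 => [|m] // m_gt3.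
have : 4 * m <= m.+1 * m by rewrite leq_mul2r m_gt3 orbT.
have : m.+1 * m.+1 = m.+1 * m + m.+1 by rewrite mulnS addnC.
lia.
Qed.

Lemma defect_small m : defect m <= 2 ->
  (defect m = 0 /\ (m = 2 \/ m = 3)) \/ (defect m = 2 /\ (m = 1 \/ m = 4)).
Proof.
case: (leqP m 5) => [|m_gt5]; first by case: m => [|[|[|[|[|[|]]]]]]; auto.
have : 6 * m <= m * m by rewrite leq_mul2r m_gt5 orbT.
rewrite /defect; lia.
Qed.

Lemma pow2_mod3 n : exists m, 2 ^ n = 3 * m + (if odd n then 2 else 1).
Proof.
elim: n => [|n [m IH]]; first by exists 0.
rewrite expnS IH /=; case: (odd n) => /=.
  by exists (2 * m + 1); lia.
by exists (2 * m); lia.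
Qed.

Lemma cards3P (T : finType) (A : {set T}) : #|A| = 3 ->
  exists y1 y2 y3, uniq [:: y1; y2; y3] /\ A =i [:: y1; y2; y3].
Proof.
rewrite cardE; have := enum_uniq (mem A); have := mem_enum (mem A).
case: (enum A) => [|y1 [|y2 [|y3 [|? ?]]]] memA uniqA // _.
by exists y1, y2, y3; split=> // x; rewrite -memA.
Qed.

Section Fibres.
Variables (F : finFieldType) (f : F -> F).
Local Notation w := (omega f).

Lemma sum_omega : \sum_(y in Im f) w y = #|F|.
Proof.
rewrite -sum1_card [RHS](partition_big f (mem (Im f))) /=; last first.
  by move=> x _; apply: imset_f.
apply: eq_bigr => y _; rewrite /omega sum1dep_card.
by apply: eq_card => x; rewrite !inE.
Qed.

(* Ordered pairs of distinct points with equal images, grouped by the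
   first point of the pair. *)
Lemma sum_fibre_pairs :
  \sum_(y in Im f) w y * (w y).-1 = \sum_x (w (f x)).-1.
Proof.
rewrite [RHS](partition_big f (mem (Im f))) /=; last first.
  by move=> x _; apply: imset_f.
apply: eq_bigr => y _ /=.
rewrite (eq_bigr (fun _ => (w y).-1)); last by move=> x /eqP->.
rewrite (eq_bigl (fun x => x \in [set x | f x == y])); last by move=> x; rewrite inE.
by rewrite sum_nat_const mulnC.
Qed.

Lemma omega_pred x :
  (w (f x)).-1 = #|[set a : F | (a != 0)%R && (f (x + a)%R == f x)]|.
Proof.
rewrite /omega (cardsD1 x) inE eqxx add1n /=.
rewrite -[RHS](card_imset _ (addrI x)); apply: eq_card => y; rewrite !inE.
apply/andP/imsetP => [[y_neq_x fy] | [a]].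
  exists (y - x)%R; last by rewrite addrC subrK.
  by rewrite inE subr_eq0 y_neq_x addrC subrK fy.
rewrite inE => /andP [a_neq0 fxa] ->.
by rewrite fxa -{2}[x]addr0 (inj_eq (addrI x)) a_neq0.
Qed.

Definition twos (S : {set F}) : {set F} := [set y in S | w y == 2].

Lemma card_twos (S : {set F}) : {in S, forall y, w y = 2 \/ w y = 3} ->
  \sum_(y in S) w y + #|twos S| = 3 * #|S|.
Proof.
move=> w23; rewrite -sum1dep_card big_mkcondr -big_split -sum1_card big_distrr /=.
by apply: eq_bigr => y Sy; case: (w23 y Sy) => ->.
Qed.

Lemma three_off_twos (S : {set F}) y : {in S, forall y, w y = 2 \/ w y = 3} ->
  y \in S -> y \notin twos S -> w y = 3.
Proof. by move=> w23 Sy; rewrite inE Sy; case: (w23 y Sy) => ->. Qed.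

Lemma mem_twos (S : {set F}) y : y \in twos S -> y \in S /\ w y = 2.
Proof. by rewrite inE => /andP [-> /eqP]. Qed.

Lemma sum_defect : \sum_(y in Im f) w y * (w y).-1 + 6 * #|Im f|
  = 4 * #|F| + \sum_(y in Im f) defect (w y).
Proof.
rewrite -sum_omega -sum1_card !big_distrr /= -!big_split /=.
by apply: eq_bigr => y _; rewrite muln1 defect_id.
Qed.

Lemma defect0_fibres (S : {set F}) : \sum_(y in S) defect (w y) = 0 ->
  {in S, forall y, w y = 2 \/ w y = 3}.
Proof.
move=> sum0 y Sy.
have : defect (w y) <= 0 by rewrite -sum0 (bigD1 y) //= leq_addr.
rewrite leqn0 => /eqP dy0.
by case: (@defect_small (w y)); rewrite dy0 // => -[].
Qed.

Lemma defect2_fibres (S : {set F}) : \sum_(y in S) defect (w y) <= 2 ->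
  {in S, forall y, w y = 2 \/ w y = 3} \/
  exists2 y0, y0 \in S & (w y0 = 1 \/ w y0 = 4) /\
                        {in S :\ y0, forall y, w y = 2 \/ w y = 3}.
Proof.
move=> sum_le2.
case: (pickP (fun y => (y \in S) && (defect (w y) != 0))) => [y0 | none].
  case/andP=> Sy0 dy0; right; exists y0 => //.
  have : \sum_(y in S) defect (w y)
         = defect (w y0) + \sum_(y in S :\ y0) defect (w y).
    by rewrite (big_setD1 y0).
  move=> split_sum; have := @defect_small (w y0) ltac:(lia).
  case=> [[d0 _] | [d2 w14]]; first by rewrite d0 in dy0.
  split=> //; apply: defect0_fibres; lia.
left; apply: defect0_fibres; apply/eqP; rewrite sum_nat_eq0.
by apply/forall_inP => y Sy; have := none y; rewrite Sy => /negbFE.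
Qed.

Lemma odd_pattern : {in Im f, forall y, w y = 2 \/ w y = 3} ->
  3 * #|Im f| = #|F| + 1 ->
  exists2 y0, y0 \in Im f &
    w y0 = 2 /\ (forall y, y \in Im f -> y != y0 -> w y = 3).
Proof.
move=> w23 k_eq; have := card_twos w23; rewrite sum_omega => twos_eq.
have /cards1P [y0 twos1] : #|twos (Im f)| == 1 by apply/eqP; lia.
have [Iy0 wy0] : y0 \in Im f /\ w y0 = 2 by apply: mem_twos; rewrite twos1 set11.
exists y0 => //; split=> // y Iy y_neq_y0.
by apply: (three_off_twos w23) => //; rewrite twos1 inE.
Qed.

Lemma even_regular_pattern : {in Im f, forall y, w y = 2 \/ w y = 3} ->
  3 * #|Im f| = #|F| + 2 ->
  exists y0 y1,
    [/\ y0 \in Im f, y1 \in Im f, y0 != y1, w y0 = 2 /\ w y1 = 2 &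
        forall y, y \in Im f -> y != y0 -> y != y1 -> w y = 3].
Proof.
move=> w23 k_eq; have := card_twos w23; rewrite sum_omega => twos_eq.
have /cards2P [y0 [y1 [y01 twos2]]] : #|twos (Im f)| == 2 by apply/eqP; lia.
have [Iy0 wy0] : y0 \in Im f /\ w y0 = 2 by apply: mem_twos; rewrite twos2 set21.
have [Iy1 wy1] : y1 \in Im f /\ w y1 = 2 by apply: mem_twos; rewrite twos2 set22.
exists y0, y1; split=> // y Iy y_neq_y0 y_neq_y1.
apply: (three_off_twos w23) => //.
by rewrite twos2 !inE negb_or y_neq_y0 y_neq_y1.
Qed.

(* Extremal case, n even, with an exceptional fibre over y0 of size 1 or 4:
   the other fibres contain w(y0) - 1 fibres of size 2, i.e. none (f is
   almost-3-to-1) or three. *)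
Lemma even_exceptional_pattern y0 : y0 \in Im f -> w y0 = 1 \/ w y0 = 4 ->
  {in Im f :\ y0, forall y, w y = 2 \/ w y = 3} ->
  3 * #|Im f| = #|F| + 2 ->
  (exists2 y0, y0 \in Im f &
     w y0 = 1 /\ (forall y, y \in Im f -> y != y0 -> w y = 3)) \/
  (exists y0 y1 y2 y3,
     [/\ [/\ y0 \in Im f, y1 \in Im f, y2 \in Im f & y3 \in Im f],
         uniq [:: y0; y1; y2; y3],
         [/\ w y0 = 2, w y1 = 2, w y2 = 2 & w y3 = 4] &
         forall y, y \in Im f -> y \notin [:: y0; y1; y2; y3] -> w y = 3]).
Proof.
set S := Im f :\ y0 => Iy0 w14 w23 k_eq.
have twos_eq := card_twos w23.
have cardS : #|Im f| = 1 + #|S| by rewrite (cardsD1 y0) Iy0.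
have sumS : #|F| = w y0 + \sum_(y in S) w y.
  by rewrite -sum_omega (big_setD1 y0 Iy0).
have inS y : y \in Im f -> y != y0 -> y \in S by rewrite !inE => -> ->.
case: w14 => wy0; [left | right].
  exists y0 => //; split=> // y Iy y_neq_y0.
  have /eqP /cards0_eq twos0 : #|twos S| == 0 by apply/eqP; lia.
  by apply: (three_off_twos w23); rewrite ?inS ?twos0 ?inE.
have card_twos3 : #|twos S| = 3 by lia.
have [y1 [y2 [y3 [uniq123 twos3]]]] := cards3P card_twos3.
have in_twos y : y \in [:: y1; y2; y3] -> y \in Im f /\ w y = 2 /\ y != y0.
  by rewrite -twos3 => /mem_twos [/setD1P [? ?] ?].
have [I1 [w1 n1]] := in_twos y1 (mem_head _ _).
have [I2 [w2 n2]] := in_twos y2 ltac:(by rewrite !inE eqxx orbT).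
have [I3 [w3 n3]] := in_twos y3 ltac:(by rewrite !inE eqxx !orbT).
exists y1, y2, y3, y0; split=> //.
  change (uniq (rcons [:: y1; y2; y3] y0)); rewrite rcons_uniq uniq123 andbT.
  by rewrite !inE !negb_or ![y0 == _]eq_sym n1 n2 n3.
move=> y Iy; rewrite !inE !negb_or => /and4P [? ? ? y_neq_y0].
apply: (three_off_twos w23); first exact: inS.
by rewrite twos3 !inE !negb_or; apply/and3P.
Qed.

Section APN.
Hypotheses (char2 : 2 \in [pchar F]%R) (apnf : APN f).

(* In characteristic 2, f(x + a) + f(x) = 0 means f(x + a) = f(x), so APN
   bounds the collisions in each direction a <> 0. *)
Lemma APN_collisions (a : F) : (a != 0)%R ->
  #|[set x : F | f (x + a)%R == f x]| <= 2.
Proof.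
move=> a_neq0; have -> : [set x | f (x + a)%R == f x]
                          = [set x | (f (x + a) + f x)%R == 0%R].
  by apply/setP => x; rewrite !inE addr_eq0 (oppr_pchar2 char2).
exact: apnf.
Qed.

(* Counting the pairs (x, a), a <> 0, f(x + a) = f(x) direction by
   direction: at most 2 (N - 1) collisions. *)
Lemma collision_count :
  \sum_(y in Im f) w y * (w y).-1 <= 2 * #|F|.-1.
Proof.
rewrite sum_fibre_pairs; under eq_bigr do rewrite omega_pred -sum1dep_card.
rewrite (exchange_big_dep (fun a : F => a != 0%R)) /=; last by move=> x a _ /andP [].
rewrite -(cardC1 (0 : F)%R) -sum1_card big_distrr /=.
apply: leq_sum => a a_neq0; rewrite sum1dep_card muln1.
apply: leq_trans (APN_collisions a_neq0); apply: subset_leq_card.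
by apply/subsetP => x; rewrite !inE => /andP [].
Qed.

Lemma defect_budget :
  2 * #|F| + 2 + \sum_(y in Im f) defect (w y) <= 6 * #|Im f|.
Proof.
have := collision_count; have := sum_defect.
have : 0 < #|F| by apply/card_gt0P; exists 0%R.
lia.
Qed.

End APN.
End Fibres.

Theorem theorem4p2 (F : finFieldType) (n : nat) (f : F -> F) :
  #|F| = 2 ^ n -> APN f ->
  (* lower bound *)
  ((odd n -> 2 ^ n + 1 <= 3 * #|Im f|) /\
   (~~ odd n -> 2 ^ n + 2 <= 3 * #|Im f|)) /\
  (* equality case, n odd *)
  (odd n -> 3 * #|Im f| = 2 ^ n + 1 ->
     exists2 y0, y0 \in Im f &
       omega f y0 = 2 /\
       (forall y, y \in Im f -> y != y0 -> omega f y = 3)) /\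
  (* equality case, n even *)
  (~~ odd n -> 3 * #|Im f| = 2 ^ n + 2 ->
     (exists2 y0, y0 \in Im f &
        omega f y0 = 1 /\
        (forall y, y \in Im f -> y != y0 -> omega f y = 3)) \/
     (exists y0 y1,
        [/\ y0 \in Im f, y1 \in Im f, y0 != y1,
            omega f y0 = 2 /\ omega f y1 = 2 &
            forall y, y \in Im f -> y != y0 -> y != y1 -> omega f y = 3]) \/
     (exists y0 y1 y2 y3,
        [/\ [/\ y0 \in Im f, y1 \in Im f, y2 \in Im f & y3 \in Im f],
            uniq [:: y0; y1; y2; y3],
            [/\ omega f y0 = 2, omega f y1 = 2, omega f y2 = 2 & omega f y3 = 4] &
            forall y, y \in Im f -> y \notin [:: y0; y1; y2; y3] ->
              omega f y = 3])).
Proof.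
move=> cardF apnf.
have budget := defect_budget (card_finPcharP cardF isT) apnf.
rewrite cardF in budget; have [m pow2] := pow2_mod3 n.
split; first by split=> n_par; rewrite ?n_par ?(negbTE n_par) in pow2; lia.
set D := \sum_(y in Im f) defect (omega f y) in budget.
split=> [n_odd k_eq | n_even k_eq].
  rewrite n_odd in pow2; have D0 : D = 0 by lia.
  by apply: odd_pattern; [exact: defect0_fibres D0 | rewrite cardF].
rewrite (negbTE n_even) in pow2; have D_le2 : D <= 2 by lia.
have [w23 | [y0 Iy0 [w14 w23]]] := defect2_fibres D_le2.
  by right; left; apply: even_regular_pattern; rewrite ?cardF.
have := even_exceptional_pattern Iy0 w14 w23 ltac:(by rewrite cardF).
by case=> ?; [left | right; right].
Qed.
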